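(* Let $\Gamma_1:[0,1]\to\mathbb{R}^{1\times n}$ be the solution of $\Gamma_1''(x)=\varepsilon_1^{-1}\Gamma_1(x)A$, $\Gamma_1(0)=\Gamma_0$, $\Gamma_1'(0)=0$. The first-order hyperbolic system on $\mathcal{T}$ \begin{align*} \sqrt{\varepsilon_1}\partial_xk_{11}+\sqrt{\varepsilon_1}\partial_yk_{11}&=\check k_{11}, & \sqrt{\varepsilon_1}\partial_xk_{12}+\sqrt{\varepsilon_2}\partial_yk_{12}&=\check k_{12},\\ \sqrt{\varepsilon_1}\partial_x\check k_{11}-\sqrt{\varepsilon_1}\partial_y\check k_{11}&=0, & \sqrt{\varepsilon_1}\partial_x\check k_{12}-\sqrt{\varepsilon_2}\partial_y\check k_{12}&=0, \end{align*} with boundary conditions \begin{align*} k_{11}(x,0)&=\frac{a\varepsilon_2}{\varepsilon_1(a\varepsilon_2+\sqrt{\varepsilon_1\varepsilon_2})}\int_0^x\big[\sqrt{\varepsilon_1}\check k_{11}(y,0)+\sqrt{\varepsilon_2}\check k_{12}(y,0)-\Gamma_1(y)B\big]dy,\\ k_{12}(x,0)&=\frac{1}{a\varepsilon_2+\sqrt{\varepsilon_1\varepsilon_2}}\int_0^x\big[\sqrt{\varepsilon_1}\check k_{11}(y,0)+\sqrt{\varepsilon_2}\check k_{12}(y,0)-\Gamma_1(y)B\big]dy,\\ k_{12}(x,x)&=0,\qquad \check k_{11}(x,x)=0,\qquad \check k_{12}(x,x)=0, \end{align*} admits a unique solution (in the sense of integration along characteristics) with $k_{11},k_{12},\check k_{11},\check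 k_{12}\in C(\mathcal{T})$.
   Context: Fix $\varepsilon>0$, $y_0\in(-1,0)$; $\varepsilon_1=\varepsilon/(1+y_0)^2$, $\varepsilon_2=\varepsilon/(1-y_0)^2$ (so $\varepsilon_1>\varepsilon_2>0$), $a=(1+y_0)/(1-y_0)\in(0,1)$. $A\in\mathbb{R}^{n\times n}$, $B\in\mathbb{R}^{n\times1}$, $\Gamma_0\in\mathbb{R}^{1\times n}$. $\mathcal{T}=\{(x,y):0\le y\le x\le1\}$. *)

From Stdlib Require Import Reals Lra.
Open Scope R_scope.

Fixpoint rsum (n : nat) (f : nat -> R) : R :=
  match n with O => 0 | S m => rsum m f + f m end.

Definition eps1 (eps y0 : R) : R := eps / (1 + y0) ^ 2.
Definition eps2 (eps y0 : R) : R := eps / (1 - y0) ^ 2.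
Definition acoef (y0 : R) : R := (1 + y0) / (1 - y0).

Definition InT (x y : R) : Prop := 0 <= y /\ y <= x /\ x <= 1.

Definition int_eq (f : R -> R) (a b v : R) : Prop :=
  exists pr : Riemann_integrable f a b, RiemannInt pr = v.

Definition cont_on_T (k : R -> R -> R) : Prop :=
  forall x y, InT x y -> forall e, 0 < e -> exists d, 0 < d /\
    forall x' y', InT x' y' -> Rabs (x' - x) < d -> Rabs (y' - y) < d ->
      Rabs (k x' y' - k x y) < e.

(* k solves  lam * d_x k + mu * d_y k = f  in the sense of integration along
   characteristics: along every characteristic segment in T,
   k(P) - k(P - t (lam,mu)) = int_0^t f(P - s (lam,mu)) ds. *)
Definition char_sol (lam mu : R) (k f : R -> R -> R) : Prop :=
  forall x y t, 0 <= t -> InT x y -> InT (x - t * lam) (y - t * mu) ->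
    int_eq (fun s => f (x - s * lam) (y - s * mu)) 0 t
           (k x y - k (x - t * lam) (y - t * mu)).

(* Gamma1 : row vector (components i < n), solution of
   Gamma1'' = eps1^{-1} Gamma1 A, Gamma1(0) = Gamma0, Gamma1'(0) = 0 on [0,1]. *)
Definition Gamma1_sol (n : nat) (A : nat -> nat -> R) (G0 : nat -> R) (e1 : R)
  (G1 : R -> nat -> R) : Prop :=
  exists dG1 : R -> nat -> R,
    (forall i, (i < n)%nat -> G1 0 i = G0 i /\ dG1 0 i = 0) /\
    (forall i, (i < n)%nat -> forall x, 0 <= x <= 1 ->
       derivable_pt_lim (fun z => G1 z i) x (dG1 x i) /\
       derivable_pt_lim (fun z => dG1 z i) x
         (/ e1 * rsum n (fun j => G1 x j * A j i))).

Definition is_solution (eps y0 : R) (n : nat) (B : nat -> R) (G1 : R -> nat -> R)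
  (k11 k12 c11 c12 : R -> R -> R) : Prop :=
  let e1 := eps1 eps y0 in
  let e2 := eps2 eps y0 in
  let a := acoef y0 in
  let I := fun y => sqrt e1 * c11 y 0 + sqrt e2 * c12 y 0
                    - rsum n (fun j => G1 y j * B j) in
  cont_on_T k11 /\ cont_on_T k12 /\ cont_on_T c11 /\ cont_on_T c12 /\
  char_sol (sqrt e1) (sqrt e1) k11 c11 /\
  char_sol (sqrt e1) (sqrt e2) k12 c12 /\
  char_sol (sqrt e1) (- sqrt e1) c11 (fun _ _ => 0) /\
  char_sol (sqrt e1) (- sqrt e2) c12 (fun _ _ => 0) /\
  (forall x, 0 <= x <= 1 -> exists v, int_eq I 0 x v /\
     k11 x 0 = a * e2 / (e1 * (a * e2 + sqrt (e1 * e2))) * v /\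
     k12 x 0 = 1 / (a * e2 + sqrt (e1 * e2)) * v) /\
  (forall x, 0 <= x <= 1 -> k12 x x = 0 /\ c11 x x = 0 /\ c12 x x = 0).

From Pilot Require Import Defs.
From Stdlib Require Import Reals Lra Lia.
Open Scope R_scope.

(* Write s1 = sqrt eps1 > s2 = sqrt eps2 > 0.  The
   equations for the checked kernels c11, c12 are homogeneous transport
   equations whose characteristics, followed backwards, leave the triangle
   through the diagonal, where c11 = c12 = 0; hence c11 = c12 = 0 on T.
   The boundary integrand then reduces to -Gamma1(y)B, whose primitive V
   (V(0) = 0) gives k11(u,0) = alpha V(u), k12(u,0) = beta V(u).  Since
   the right-hand sides of the k-equations now vanish, k11 and k12 are
   constant along their characteristics; following these back to the axis
   y = 0 (or, for k12, to the diagonal where k12 = 0) yields the closed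
   forms k11(x,y) = alpha V(x-y), k12(x,y) = beta V(max(x - y s1/s2, 0)).
   This proves uniqueness, and checking that these closed forms are
   continuous and solve the system proves existence. *)

Lemma int_eq_unique f g u v w : 0 <= u -> int_eq f 0 u v -> int_eq g 0 u w ->
  (forall s, 0 < s < u -> f s = g s) -> v = w.
Proof.
  intros Hu [p1 <-] [p2 <-] Hfg.
  now apply RiemannInt_P18.
Qed.

Lemma int_eq_zero t : int_eq (fun _ => 0) 0 t 0.
Proof.
  exists (RiemannInt_P14 0 t 0).
  exact (eq_trans (RiemannInt_P15 _) (Rmult_0_l _)).
Qed.

Lemma int_eq_vanishing f t v : 0 <= t -> (forall s, 0 < s < t -> f s = 0) ->
  int_eq f 0 t v -> v = 0.
Proof.
  intros Ht Hf Hv.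
  exact (int_eq_unique f (fun _ => 0) t v 0 Ht Hv (int_eq_zero t) Hf).
Qed.

Lemma continuous_primitive f : (forall x, 0 <= x <= 1 -> continuity_pt f x) ->
  exists V, V 0 = 0 /\
    forall u, 0 <= u <= 1 -> int_eq f 0 u (V u) /\ continuity_pt V u.
Proof.
  intros Cf.
  assert (h01 : 0 <= 1) by lra.
  exists (primitive h01 (FTC_P1 h01 Cf)). split.
  - unfold primitive.
    destruct (Rle_dec 0 0); [|lra]. destruct (Rle_dec 0 1); [|lra].
    apply RiemannInt_P9.
  - intros u Hu. split.
    + unfold primitive.
      destruct (Rle_dec 0 u); [|lra]. destruct (Rle_dec u 1); [|lra].
      eexists; reflexivity.
    + apply derivable_continuous_pt. exists (f u).
      now apply RiemannInt_P28.
Qed.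

Lemma affine_nonneg a b t s : 0 <= a -> 0 <= a - t * b -> 0 < s < t ->
  0 <= a - s * b.
Proof.
  intros. destruct (Rle_dec 0 b); nra.
Qed.

(* T is convex: a characteristic segment with both ends in T stays in T. *)
Lemma InT_segment x y lam mu t s : InT x y -> InT (x - t * lam) (y - t * mu) ->
  0 < s < t -> InT (x - s * lam) (y - s * mu).
Proof.
  unfold InT. intros H1 H2 Hs.
  assert (Hy := affine_nonneg y mu t s ltac:(lra) ltac:(lra) Hs).
  assert (Hxy := affine_nonneg (x - y) (lam - mu) t s ltac:(lra) ltac:(nra) Hs).
  assert (Hx := affine_nonneg (1 - x) (- lam) t s ltac:(lra) ltac:(nra) Hs).
  nra.
Qed.

Lemma transport lam mu k f x y t : char_sol lam mu k f ->
  (forall x y, InT x y -> f x y = 0) -> 0 <= t -> InT x y ->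
  InT (x - t * lam) (y - t * mu) -> k x y = k (x - t * lam) (y - t * mu).
Proof.
  intros Hk Hf Ht H1 H2.
  assert (E : k x y - k (x - t * lam) (y - t * mu) = 0).
  { apply (int_eq_vanishing (fun s => f (x - s * lam) (y - s * mu)) t _ Ht);
      [|exact (Hk x y t Ht H1 H2)].
    intros s Hs. apply Hf. exact (InT_segment x y lam mu t s H1 H2 Hs). }
  lra.
Qed.

(* Backward characteristics of slope -mu/lam reach the diagonal, so vanishing
   there forces vanishing on all of T. *)
Lemma backward_char_vanishes lam mu k : 0 < lam -> 0 < mu ->
  char_sol lam (- mu) k (fun _ _ => 0) -> (forall x, 0 <= x <= 1 -> k x x = 0) ->
  forall x y, InT x y -> k x y = 0.
Proof.
  intros Hl Hm Hk Hdiag x y Hxy. unfold InT in Hxy.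
  set (t := (x - y) / (lam + mu)).
  set (z := (x * mu + y * lam) / (lam + mu)).
  assert (Ht : 0 <= t) by (apply Rmult_le_pos; [lra | left; apply Rinv_0_lt_compat; lra]).
  assert (Ex : x - t * lam = z) by (unfold t, z; field; lra).
  assert (Ey : y - t * - mu = z) by (unfold t, z; field; lra).
  assert (Hz : 0 <= z <= x).
  { unfold z. split.
    - apply Rmult_le_pos; [nra | left; apply Rinv_0_lt_compat; lra].
    - apply Rmult_le_reg_r with (lam + mu); [lra|].
      unfold Rdiv. rewrite Rmult_assoc, Rinv_l by lra. nra. }
  rewrite (transport lam (- mu) k (fun _ _ => 0) x y t Hk (fun _ _ _ => eq_refl)
             Ht ltac:(unfold InT; lra) ltac:(rewrite Ex, Ey; unfold InT; lra)).
  rewrite Ex, Ey. apply Hdiag. lra.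
Qed.

(* When y lam <= x mu, the forward characteristic through (x,y) traced back
   meets the axis y = 0 inside T. *)
Lemma char_to_axis lam mu k f x y : 0 < lam -> 0 < mu -> char_sol lam mu k f ->
  (forall x y, InT x y -> f x y = 0) -> InT x y -> y * lam <= x * mu ->
  k x y = k (x - y * lam / mu) 0.
Proof.
  intros Hl Hm Hk Hf Hxy Hc. unfold InT in Hxy.
  assert (Ex : x - y / mu * lam = x - y * lam / mu) by (field; lra).
  assert (Ey : y - y / mu * mu = 0) by (field; lra).
  assert (Ht : 0 <= y / mu) by (apply Rmult_le_pos; [lra | left; apply Rinv_0_lt_compat; lra]).
  assert (Hq : 0 <= y * lam / mu <= x).
  { split.
    - apply Rmult_le_pos; [nra | left; apply Rinv_0_lt_compat; lra].
    - apply Rmult_le_reg_r with mu; [lra|].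
      unfold Rdiv. rewrite Rmult_assoc, Rinv_l by lra. lra. }
  rewrite (transport lam mu k f x y (y / mu) Hk Hf Ht ltac:(unfold InT; lra)
             ltac:(rewrite Ex, Ey; unfold InT; lra)).
  now rewrite Ex, Ey.
Qed.

(* When x mu <= y lam (and mu < lam), the same characteristic meets the
   diagonal first, at a point (z,z) with 0 <= z <= x. *)
Lemma char_to_diag lam mu k f x y : 0 < mu < lam -> char_sol lam mu k f ->
  (forall x y, InT x y -> f x y = 0) -> InT x y -> x * mu <= y * lam ->
  exists z, 0 <= z <= x /\ k x y = k z z.
Proof.
  intros Hml Hk Hf Hxy Hc. unfold InT in Hxy.
  set (z := (y * lam - x * mu) / (lam - mu)).
  set (t := (x - y) / (lam - mu)).
  assert (Ht : 0 <= t) by (apply Rmult_le_pos; [lra | left; apply Rinv_0_lt_compat; lra]).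
  assert (Ex : x - t * lam = z) by (unfold t, z; field; lra).
  assert (Ey : y - t * mu = z) by (unfold t, z; field; lra).
  assert (Hz : 0 <= z <= x).
  { unfold z. split.
    - apply Rmult_le_pos; [lra | left; apply Rinv_0_lt_compat; lra].
    - apply Rmult_le_reg_r with (lam - mu); [lra|].
      unfold Rdiv. rewrite Rmult_assoc, Rinv_l by lra. nra. }
  exists z. split; [exact Hz|].
  rewrite (transport lam mu k f x y t Hk Hf Ht ltac:(unfold InT; lra)
             ltac:(rewrite Ex, Ey; unfold InT; lra)).
  now rewrite Ex, Ey.
Qed.

Lemma char_sol_invariant lam mu k :
  (forall x y t, k (x - t * lam) (y - t * mu) = k x y) ->
  char_sol lam mu k (fun _ _ => 0).
Proof.
  intros Hinv x y t _ _ _.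
  rewrite Hinv, Rminus_diag. apply int_eq_zero.
Qed.

Lemma cont_on_T_const c : cont_on_T (fun _ _ => c).
Proof.
  intros x y _ e He. exists 1. split; [lra|].
  intros. rewrite Rminus_diag, Rabs_R0. exact He.
Qed.

Lemma cont_on_T_scale c k : cont_on_T k -> cont_on_T (fun x y => c * k x y).
Proof.
  intros Hk x y Hxy e He.
  pose proof (Rabs_pos c) as Hc.
  destruct (Hk x y Hxy (e / (Rabs c + 1))) as [d [Hd Hkd]].
  { apply Rdiv_lt_0_compat; lra. }
  exists d. split; [exact Hd|]. intros x' y' H' Hx Hy.
  rewrite <- Rmult_minus_distr_l, Rabs_mult.
  assert (Hb : Rabs c * (e / (Rabs c + 1)) < e).
  { apply (Rmult_lt_reg_r (Rabs c + 1)); [lra|]. field_simplify; lra. }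
  specialize (Hkd x' y' H' Hx Hy). nra.
Qed.

Lemma cont_on_T_comp (V : R -> R) (phi : R -> R -> R) C :
  (forall u, 0 <= u <= 1 -> continuity_pt V u) ->
  (forall x y, InT x y -> 0 <= phi x y <= 1) -> 0 < C ->
  (forall x y x' y',
     Rabs (phi x' y' - phi x y) <= C * (Rabs (x' - x) + Rabs (y' - y))) ->
  cont_on_T (fun x y => V (phi x y)).
Proof.
  intros HV Hphi HC Hlip x y Hxy e He.
  destruct (HV _ (Hphi _ _ Hxy) e He) as [a [Ha HVa]].
  exists (a / (2 * C)). split; [apply Rdiv_lt_0_compat; lra|].
  intros x' y' H' Hx Hy.
  destruct (Req_dec (phi x' y') (phi x y)) as [Eq|Ne].
  { rewrite Eq, Rminus_diag, Rabs_R0. exact He. }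
  apply (HVa (phi x' y')). split; [split; [exact I | auto]|].
  eapply Rle_lt_trans; [apply Hlip|].
  assert (a / (2 * C) * C = a / 2) by (field; lra). nra.
Qed.

Lemma lin_lipschitz r x y x' y' : 0 <= r ->
  Rabs ((x' - y' * r) - (x - y * r)) <= (1 + r) * (Rabs (x' - x) + Rabs (y' - y)).
Proof.
  intros Hr.
  replace ((x' - y' * r) - (x - y * r)) with ((x' - x) + - (r * (y' - y))) by ring.
  eapply Rle_trans; [apply Rabs_triang|].
  rewrite Rabs_Ropp, Rabs_mult, (Rabs_pos_eq r Hr).
  pose proof (Rabs_pos (x' - x)). pose proof (Rabs_pos (y' - y)). nra.
Qed.

Lemma Rmax0_lipschitz p q : Rabs (Rmax p 0 - Rmax q 0) <= Rabs (p - q).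
Proof.
  unfold Rmax. destruct (Rle_dec p 0), (Rle_dec q 0);
  unfold Rabs; repeat destruct Rcase_abs; lra.
Qed.

Lemma rsum_continuous (g : R -> nat -> R) m u :
  (forall j, (j < m)%nat -> continuity_pt (fun y => g y j) u) ->
  continuity_pt (fun y => rsum m (g y)) u.
Proof.
  induction m as [|m IH]; intros H; simpl.
  - apply continuity_pt_const. intros a b; reflexivity.
  - apply (continuity_pt_plus (fun y => rsum m (g y)) (fun y => g y m)).
    + apply IH. intros j Hj. apply H. lia.
    + apply H. lia.
Qed.

Definition feedback (eps y0 : R) (n : nat) (B : nat -> R) (G1 : R -> nat -> R)
  (c11 c12 : R -> R -> R) (y : R) : R :=
  sqrt (eps1 eps y0) * c11 y 0 + sqrt (Defs.eps2 eps y0) * c12 y 0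
  - rsum n (fun j => G1 y j * B j).

Definition alpha (eps y0 : R) : R :=
  acoef y0 * Defs.eps2 eps y0 /
  (eps1 eps y0 *
   (acoef y0 * Defs.eps2 eps y0 + sqrt (eps1 eps y0 * Defs.eps2 eps y0))).
Definition beta (eps y0 : R) : R :=
  1 / (acoef y0 * Defs.eps2 eps y0 + sqrt (eps1 eps y0 * Defs.eps2 eps y0)).

Definition k11_closed (al : R) (V : R -> R) (x y : R) : R := al * V (x - y).
Definition k12_closed (be r : R) (V : R -> R) (x y : R) : R :=
  be * V (Rmax (x - y * r) 0).

Lemma eps_order eps y0 : 0 < eps -> -1 < y0 < 0 -> 0 < Defs.eps2 eps y0 < eps1 eps y0.
Proof.
  intros He Hy. unfold eps1, Defs.eps2. split.
  - apply Rdiv_lt_0_compat; auto. apply pow_lt. lra.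
  - unfold Rdiv. apply Rmult_lt_compat_l; auto. apply Rinv_lt_contravar.
    + apply Rmult_lt_0_compat; apply pow_lt; lra.
    + simpl. nra.
Qed.

(* The feedback with vanishing checked kernels is continuous, since Gamma1
   is differentiable. *)
Lemma feedback_continuous eps y0 n A G0 B G1 :
  Gamma1_sol n A G0 (eps1 eps y0) G1 ->
  forall u, 0 <= u <= 1 ->
  continuity_pt (feedback eps y0 n B G1 (fun _ _ => 0) (fun _ _ => 0)) u.
Proof.
  intros [dG1 [_ HD]] u Hu. unfold feedback.
  apply (continuity_pt_minus (fun _ => _ * 0 + _ * 0)
           (fun y => rsum n (fun j => G1 y j * B j))).
  - apply continuity_pt_const. intros p q; reflexivity.
  - apply (rsum_continuous (fun y j => G1 y j * B j)). intros j Hj.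
    apply (continuity_pt_mult (fun y => G1 y j) (fun _ => B j)).
    + apply derivable_continuous_pt. exists (dG1 u j). apply (HD j Hj u Hu).
    + apply continuity_pt_const. intros p q; reflexivity.
Qed.

Section ClosedForm.

Variables (eps y0 : R) (n : nat) (B : nat -> R) (G1 : R -> nat -> R).
Local Notation s1 := (sqrt (eps1 eps y0)).
Local Notation s2 := (sqrt (Defs.eps2 eps y0)).
Hypothesis s_order : 0 < s2 < s1.

Variable V : R -> R.
Hypothesis V_0 : V 0 = 0.
Hypothesis V_primitive : forall u, 0 <= u <= 1 ->
  int_eq (feedback eps y0 n B G1 (fun _ _ => 0) (fun _ _ => 0)) 0 u (V u).
Hypothesis V_continuous : forall u, 0 <= u <= 1 -> continuity_pt V u.

Lemma solution_checked_vanish k11 k12 c11 c12 :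
  is_solution eps y0 n B G1 k11 k12 c11 c12 ->
  forall x y, InT x y -> c11 x y = 0 /\ c12 x y = 0.
Proof.
  unfold is_solution; cbv zeta.
  intros (_ & _ & _ & _ & _ & _ & Hc11 & Hc12 & _ & Hdiag) x y Hxy.
  split.
  - apply (backward_char_vanishes s1 s1); try lra; auto.
    intros u Hu. apply (Hdiag u Hu).
  - apply (backward_char_vanishes s1 s2); try lra; auto.
    intros u Hu. apply (Hdiag u Hu).
Qed.

Lemma solution_on_axis k11 k12 c11 c12 :
  is_solution eps y0 n B G1 k11 k12 c11 c12 -> forall u, 0 <= u <= 1 ->
  k11 u 0 = alpha eps y0 * V u /\ k12 u 0 = beta eps y0 * V u.
Proof.
  intros HS u Hu.
  pose proof (solution_checked_vanish _ _ _ _ HS) as Hc.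
  unfold is_solution in HS; cbv zeta in HS.
  destruct HS as (_ & _ & _ & _ & _ & _ & _ & _ & Hbd & _).
  destruct (Hbd u Hu) as [v [Hv [E11 E12]]].
  assert (Ev : v = V u).
  { apply (int_eq_unique _ _ u v (V u) (proj1 Hu) Hv (V_primitive u Hu)).
    intros s Hs. unfold feedback.
    destruct (Hc s 0) as [-> ->]; [unfold InT; lra | reflexivity]. }
  subst v. split; assumption.
Qed.

Lemma solution_closed_form k11 k12 c11 c12 :
  is_solution eps y0 n B G1 k11 k12 c11 c12 -> forall x y, InT x y ->
  k11 x y = k11_closed (alpha eps y0) V x y /\
  k12 x y = k12_closed (beta eps y0) (s1 / s2) V x y /\
  c11 x y = 0 /\ c12 x y = 0.
Proof.
  intros HS x y Hxy.
  pose proof (solution_checked_vanish _ _ _ _ HS) as Hc.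
  pose proof (solution_on_axis _ _ _ _ HS) as Haxis.
  assert (Hc11 : forall x y, InT x y -> c11 x y = 0) by (intros; apply Hc; auto).
  assert (Hc12 : forall x y, InT x y -> c12 x y = 0) by (intros; apply Hc; auto).
  unfold is_solution in HS; cbv zeta in HS.
  destruct HS as (_ & _ & _ & _ & Hk11 & Hk12 & _ & _ & _ & Hdiag).
  pose proof Hxy as (Hy & Hyx & Hx).
  unfold k11_closed, k12_closed.
  split; [|split; [|exact (Hc x y Hxy)]].
  - rewrite (char_to_axis s1 s1 k11 c11 x y) by (auto; nra).
    replace (x - y * s1 / s1) with (x - y) by (field; lra).
    apply Haxis. lra.
  - destruct (Rle_dec (y * s1) (x * s2)) as [Hax | Hdg].
    + assert (Hq : 0 <= y * s1 / s2 <= x).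
      { split.
        - apply Rmult_le_pos; [nra | left; apply Rinv_0_lt_compat; lra].
        - apply Rmult_le_reg_r with s2; [lra|].
          unfold Rdiv. rewrite Rmult_assoc, Rinv_l by lra. lra. }
      rewrite (char_to_axis s1 s2 k12 c12 x y) by (auto; lra).
      replace (x - y * (s1 / s2)) with (x - y * s1 / s2) by (field; lra).
      rewrite Rmax_left by lra. apply Haxis. lra.
    + destruct (char_to_diag s1 s2 k12 c12 x y) as [z [Hz ->]]; auto; try lra.
      rewrite (proj1 (Hdiag z ltac:(lra))).
      assert (Hq : x <= y * (s1 / s2)).
      { apply Rmult_le_reg_r with s2; [lra|].
        unfold Rdiv. rewrite Rmult_assoc, Rmult_assoc, Rinv_l by lra. lra. }
      rewrite Rmax_right, V_0 by lra. ring.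
Qed.

Lemma closed_form_solution :
  is_solution eps y0 n B G1 (k11_closed (alpha eps y0) V)
    (k12_closed (beta eps y0) (s1 / s2) V) (fun _ _ => 0) (fun _ _ => 0).
Proof.
  assert (Hr : 1 < s1 / s2).
  { apply Rmult_lt_reg_r with s2; [lra|].
    unfold Rdiv. rewrite Rmult_assoc, Rinv_l by lra. lra. }
  unfold is_solution, k11_closed, k12_closed; cbv zeta.
  repeat split.
  - apply cont_on_T_scale, (cont_on_T_comp V (fun x y => x - y) 2);
      auto; try lra.
    + intros x y (? & ? & ?). lra.
    + intros x y x' y'.
      replace (x' - y' - (x - y)) with ((x' - y' * 1) - (x - y * 1)) by ring.
      apply lin_lipschitz. lra.
  - apply cont_on_T_scale,
      (cont_on_T_comp V (fun x y => Rmax (x - y * (s1 / s2)) 0) (1 + s1 / s2));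
      auto; try lra.
    + intros x y (? & ? & ?). split; [apply Rmax_r|].
      apply Rmax_lub; [|lra]. assert (0 <= y * (s1 / s2)) by nra. lra.
    + intros x y x' y'. eapply Rle_trans; [apply Rmax0_lipschitz|].
      apply lin_lipschitz. lra.
  - apply cont_on_T_const.
  - apply cont_on_T_const.
  - apply char_sol_invariant. intros x y t. f_equal. f_equal. ring.
  - apply char_sol_invariant. intros x y t. f_equal. f_equal. f_equal.
    field. lra.
  - apply char_sol_invariant. reflexivity.
  - apply char_sol_invariant. reflexivity.
  - intros x Hx. exists (V x). repeat split.
    + exact (V_primitive x Hx).
    + rewrite Rminus_0_r. reflexivity.
    + rewrite Rmult_0_l, Rminus_0_r, Rmax_left by lra.
      unfold beta. ring.
  - assert (Hx : x <= x * (s1 / s2)) by nra.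
    rewrite Rmax_right, V_0 by lra. ring.
Qed.

End ClosedForm.

Theorem lemma2 (eps y0 : R) (n : nat) (A : nat -> nat -> R) (B G0 : nat -> R)
  (G1 : R -> nat -> R) :
  0 < eps -> -1 < y0 < 0 ->
  Gamma1_sol n A G0 (eps1 eps y0) G1 ->
  (exists k11 k12 c11 c12 : R -> R -> R,
      is_solution eps y0 n B G1 k11 k12 c11 c12) /\
  (forall k11 k12 c11 c12 k11' k12' c11' c12' : R -> R -> R,
      is_solution eps y0 n B G1 k11 k12 c11 c12 ->
      is_solution eps y0 n B G1 k11' k12' c11' c12' ->
      forall x y, InT x y ->
        k11 x y = k11' x y /\ k12 x y = k12' x y /\
        c11 x y = c11' x y /\ c12 x y = c12' x y).
Proof.
  intros Heps Hy0 HG1.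
  pose proof (eps_order eps y0 Heps Hy0) as He.
  assert (Hs : 0 < sqrt (Defs.eps2 eps y0) < sqrt (eps1 eps y0)).
  { split; [apply sqrt_lt_R0 | apply sqrt_lt_1]; lra. }
  destruct (continuous_primitive _ (feedback_continuous eps y0 n A G0 B G1 HG1))
    as [V [V0 HV]].
  assert (HVint := fun u Hu => proj1 (HV u Hu)).
  assert (HVcont := fun u Hu => proj2 (HV u Hu)).
  split.
  - eexists _, _, _, _. exact (closed_form_solution eps y0 n B G1 Hs V V0 HVint HVcont).
  - intros k11 k12 c11 c12 k11' k12' c11' c12' HS HS' x y Hxy.
    destruct (solution_closed_form eps y0 n B G1 Hs V V0 HVint _ _ _ _ HS x y Hxy)
      as (-> & -> & -> & ->).
    destruct (solution_closed_form eps y0 n B G1 Hs V V0 HVint _ _ _ _ HS' x y Hxy)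
      as (-> & -> & -> & ->).
    repeat split.
Qed.
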